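(* Let $c>0$ be a constant. If $mp<c$ and $p\le1/2$, then for every $q\in[0,1]$, \[ \ell_1(\mathrm{Bin}(m,p),\mathrm{Bin}(m,q))\ge\frac{e^{-3c/2}}{2}\min\left(m|p-q|,1\right). \]
   Context: $m$ is a positive integer, $p\in[0,1]$, and $\ell_1(P,Q)=\sum_x|P(x)-Q(x)|$. *)

From Stdlib Require Import Reals.
Open Scope R_scope.

Definition binom_pmf (m : nat) (p : R) (k : nat) : R :=
  C m k * p ^ k * (1 - p) ^ (m - k).

(* l1 distance between Bin(m,p) and Bin(m,q): both are supported on {0,...,m},
   so the sum over all x reduces to the sum over k = 0..m. *)
Definition l1_binom (m : nat) (p q : R) : R :=
  sum_f_R0 (fun k => Rabs (binom_pmf m p k - binom_pmf m q k)) m.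

(** Comparing the two distributions at [0] alone gives
    [l1 >= |(1-p)^m - (1-q)^m|].  Writing [a >= b] for the larger and smaller
    of [1-p], [1-q], one has [b <= a (1 - (a-b))], hence
    [a^m - b^m >= a^m (1 - (1-d)^m) >= a^m min(m d, 1) / 2] with [d = |p-q|].
    Finally [a^m >= (1-p)^m >= exp(-3mp/2) >= exp(-3c/2)], using
    [1 - p >= exp(-3p/2)] for [p <= 1/2], a consequence of the second-order
    Taylor bound [exp y >= 1 + y + y^2/2]. *)
From Stdlib Require Import Reals Lra Psatz.
Open Scope R_scope.

Lemma exp_ge_taylor2 (y : R) : 0 <= y -> 1 + y + y ^ 2 / 2 <= exp y.
Proof.
  intros Hy.
  assert (Hsum : E1 y 2 <= exp y).
  { apply sum_incr; [apply E1_cvg |].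
    intros n. apply Rmult_le_pos.
    - apply Rlt_le, Rinv_0_lt_compat, INR_fact_lt_0.
    - now apply pow_le. }
  unfold E1 in Hsum. simpl in Hsum. lra.
Qed.

Lemma exp_INR_mult (n : nat) (x : R) : exp (INR n * x) = exp x ^ n.
Proof.
  rewrite <- Rpower_pow by apply exp_pos.
  unfold Rpower. now rewrite ln_exp.
Qed.

Lemma exp_le_one_sub (p : R) : 0 <= p <= 1 / 2 -> exp (- (3 * p / 2)) <= 1 - p.
Proof.
  intros Hp.
  pose proof (exp_ge_taylor2 (3 * p / 2) ltac:(lra)) as Htaylor.
  pose proof (exp_pos (3 * p / 2)) as Hpos.
  rewrite exp_Ropp.
  apply (Rmult_le_reg_l (exp (3 * p / 2))); [exact Hpos |].
  rewrite Rinv_r by lra.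
  nra.
Qed.

Lemma exp_le_pow_one_sub (c p : R) (m : nat) :
  0 <= p <= 1 / 2 -> INR m * p <= c -> exp (- (3 * c / 2)) <= (1 - p) ^ m.
Proof.
  intros Hp Hmp.
  apply Rle_trans with (exp (INR m * (- (3 * p / 2)))).
  - assert (Hle : - (3 * c / 2) <= INR m * (- (3 * p / 2))) by lra.
    destruct Hle as [Hlt | ->]; [left; now apply exp_increasing | apply Rle_refl].
  - rewrite exp_INR_mult. apply pow_incr.
    split; [apply Rlt_le, exp_pos | now apply exp_le_one_sub].
Qed.

Lemma one_sub_pow_ge_Rmin (d : R) (m : nat) :
  0 <= d <= 1 -> Rmin (INR m * d) 1 / 2 <= 1 - (1 - d) ^ m.
Proof.
  intros Hd. induction m as [| m IH].
  - simpl. rewrite Rmult_0_l, Rmin_left by lra. lra.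
  - rewrite S_INR. simpl pow.
    pose proof (pow_le (1 - d) m ltac:(lra)) as Hpow.
    destruct (Rle_dec 1 (INR m * d)) as [Hbig | Hsmall].
    + rewrite Rmin_right in IH |- * by lra.
      nra.
    + rewrite Rmin_left in IH by lra.
      pose proof (Rmin_l ((INR m + 1) * d) 1).
      nra.
Qed.

Lemma pow_sub_pow_ge (a b : R) (m : nat) :
  0 <= b <= a -> a <= 1 -> a ^ m * (Rmin (INR m * (a - b)) 1 / 2) <= a ^ m - b ^ m.
Proof.
  intros Hab Ha.
  assert (Hb : b ^ m <= a ^ m * (1 - (a - b)) ^ m).
  { rewrite <- Rpow_mult_distr. apply pow_incr. nra. }
  pose proof (one_sub_pow_ge_Rmin (a - b) m ltac:(lra)).
  pose proof (pow_le a m ltac:(lra)).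
  nra.
Qed.

Lemma Rmin_INR_mult_Rabs_ge0 (m : nat) (x : R) : 0 <= Rmin (INR m * Rabs x) 1.
Proof.
  apply Rmin_glb; [apply Rmult_le_pos; [apply pos_INR | apply Rabs_pos] | lra].
Qed.

Lemma pow_one_sub_dist_ge (p q : R) (m : nat) :
  0 <= p <= 1 -> 0 <= q <= 1 ->
  (1 - p) ^ m * (Rmin (INR m * Rabs (p - q)) 1 / 2) <= Rabs ((1 - p) ^ m - (1 - q) ^ m).
Proof.
  intros Hp Hq.
  pose proof (Rmin_INR_mult_Rabs_ge0 m (p - q)) as Hmin.
  destruct (Rle_dec q p) as [Hqp | Hpq].
  - assert (Hpow : (1 - p) ^ m <= (1 - q) ^ m) by (apply pow_incr; lra).
    pose proof (pow_sub_pow_ge (1 - q) (1 - p) m ltac:(lra) ltac:(lra)) as H.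
    replace (1 - q - (1 - p)) with (Rabs (p - q)) in H by (rewrite Rabs_right; lra).
    rewrite (Rabs_left1 ((1 - p) ^ m - (1 - q) ^ m)) by lra.
    nra.
  - assert (Hpow : (1 - q) ^ m <= (1 - p) ^ m) by (apply pow_incr; lra).
    pose proof (pow_sub_pow_ge (1 - p) (1 - q) m ltac:(lra) ltac:(lra)) as H.
    replace (1 - p - (1 - q)) with (Rabs (p - q)) in H by (rewrite Rabs_left; lra).
    rewrite (Rabs_right ((1 - p) ^ m - (1 - q) ^ m)) by lra.
    exact H.
Qed.

Lemma binom_pmf_0 (m : nat) (p : R) : binom_pmf m p 0 = (1 - p) ^ m.
Proof.
  unfold binom_pmf, C. rewrite Nat.sub_0_r. simpl.
  field. apply INR_fact_neq_0.
Qed.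

Lemma sum_f_R0_ge_first (f : nat -> R) (n : nat) :
  (forall k, 0 <= f k) -> f 0%nat <= sum_f_R0 f n.
Proof.
  intros Hf. induction n as [| n IH]; simpl; [lra |].
  specialize (Hf (S n)). lra.
Qed.

Lemma l1_binom_ge_pmf_0 (m : nat) (p q : R) :
  Rabs ((1 - p) ^ m - (1 - q) ^ m) <= l1_binom m p q.
Proof.
  rewrite <- !binom_pmf_0.
  apply (sum_f_R0_ge_first (fun k => Rabs (binom_pmf m p k - binom_pmf m q k))).
  intros k. apply Rabs_pos.
Qed.

Theorem lemma6 (c : R) (m : nat) (p q : R) :
  0 < c -> (0 < m)%nat -> 0 <= p <= 1 -> 0 <= q <= 1 ->
  INR m * p < c -> p <= 1 / 2 ->
  l1_binom m p q >= exp (- (3 * c / 2)) / 2 * Rmin (INR m * Rabs (p - q)) 1.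
Proof.
  intros _ _ Hp Hq Hmp Hp2.
  apply Rle_ge.
  pose proof (exp_le_pow_one_sub c p m ltac:(lra) ltac:(lra)) as Hexp.
  pose proof (pow_one_sub_dist_ge p q m Hp Hq) as Hdist.
  pose proof (l1_binom_ge_pmf_0 m p q) as Hl1.
  pose proof (Rmin_INR_mult_Rabs_ge0 m (p - q)) as Hmin.
  nra.
Qed.
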